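(* Let $f$ be a function of class $C^2$ on $\mathcal D=[0,1]^2$ with $f(0,0)=f(1,1)=0$. Then for $x\in\mathcal D$, $$\lim_{N\to\infty} N\big(B_N(f\circ A)(x)-f(x)\big)=L_d f(x),$$ where $$L_d f(x)=\frac{x_1(1-x_1)}{2}f_{x_1x_1}(x)+\frac{x_2(1-x_2)}{2d}f_{x_2x_2}(x)-\kappa\, Mx\cdot\nabla f(x).$$
   Context: Fix $d\in(0,1]$ and $\kappa>0$. For each $N$ with $N_2=dN$ an integer, set $N_1=N$, $M=\begin{pmatrix} d & -d\\ -1 & 1\end{pmatrix}$, $A=\mathrm{Id}-\frac{\kappa}{N}M$, and for a function $g$ on $\mathcal D$ $$B_N(g)(x)=\sum_{j_1=0}^{N_1}\sum_{j_2=0}^{N_2}\binom{N_1}{j_1}\binom{N_2}{j_2}x_1^{j_1}(1-x_1)^{N_1-j_1}x_2^{j_2}(1-x_2)^{N_2-j_2}\,g\!\left(\tfrac{j_1}{N_1},\tfrac{j_2}{N_2}\right).$$ Here $(f\circ A)(x)=f(Ax)$. *)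

From Stdlib Require Import Reals.
From Coquelicot Require Import Coquelicot.
Open Scope R_scope.

Definition D1 (f : R -> R -> R) : R -> R -> R :=
  fun x1 x2 => Derive (fun t => f t x2) x1.
Definition D2 (f : R -> R -> R) : R -> R -> R :=
  fun x1 x2 => Derive (fun t => f x1 t) x2.

Definition C1_R2 (f : R -> R -> R) : Prop :=
  forall x1 x2,
    ex_derive (fun t => f t x2) x1 /\ ex_derive (fun t => f x1 t) x2 /\
    continuity_2d_pt f x1 x2 /\ continuity_2d_pt (D1 f) x1 x2 /\
    continuity_2d_pt (D2 f) x1 x2.

Definition C2_R2 (f : R -> R -> R) : Prop :=
  C1_R2 f /\ C1_R2 (D1 f) /\ C1_R2 (D2 f).

Definition bernstein2 (N1 N2 : nat) (g : R -> R -> R) (x1 x2 : R) : R :=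
  sum_f_R0 (fun j1 =>
    sum_f_R0 (fun j2 =>
      Binomial.C N1 j1 * Binomial.C N2 j2
      * x1 ^ j1 * (1 - x1) ^ (N1 - j1)
      * x2 ^ j2 * (1 - x2) ^ (N2 - j2)
      * g (INR j1 / INR N1) (INR j2 / INR N2)) N2) N1.

(* f o A with A = Id - (kappa/N) M, M = [[d, -d], [-1, 1]]. *)
Definition compA (d kappa : R) (N : nat) (f : R -> R -> R) : R -> R -> R :=
  fun x1 x2 =>
    f (x1 - kappa / INR N * (d * x1 - d * x2))
      (x2 - kappa / INR N * (- x1 + x2)).

Definition Ld (d kappa : R) (f : R -> R -> R) (x1 x2 : R) : R :=
  x1 * (1 - x1) / 2 * D1 (D1 f) x1 x2
  + x2 * (1 - x2) / (2 * d) * D2 (D2 f) x1 x2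
  - kappa * ((d * x1 - d * x2) * D1 f x1 x2 + (- x1 + x2) * D2 f x1 x2).

(* Split f = T + R at x, with T the second-order Taylor polynomial of f.
   B_N is the expectation over the grid point (J1 / N, J2 / N2) with
   independent J1 ~ Bin(N, x1) and J2 ~ Bin(N2, x2), whose centred moments are
   explicit: the first vanishes and the second is x_i (1 - x_i) / N_i. Hence
   N (B_N(T o A)(x) - f(x)) is a polynomial in 1/N whose value at 0 is L_d f(x).
   For the remainder, continuity of the Hessian at x and its boundedness on a
   box give |R(z)| <= eps |z - x|^2 + C |z - x|^4, while the second and fourth
   moments of |A y - x| are O(1/N) and O(1/N^2), so N B_N(R o A)(x) -> 0. *)

From Stdlib Require Import Reals Lra Lia.
From Coquelicot Require Import Coquelicot.
Open Scope R_scope.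

(** * Binomial expectations *)

Definition binom_weight (n : nat) (p : R) (j : nat) : R :=
  Binomial.C n j * p ^ j * (1 - p) ^ (n - j).

Definition binom_mean (n : nat) (p : R) (h : nat -> R) : R :=
  sum_f_R0 (fun j => binom_weight n p j * h j) n.

Lemma binom_mean_ext n p h1 h2 :
  (forall j, (j <= n)%nat -> h1 j = h2 j) -> binom_mean n p h1 = binom_mean n p h2.
Proof. intros H; apply sum_eq; intros j Hj; rewrite H; auto. Qed.

Lemma binom_mean_plus n p h1 h2 :
  binom_mean n p (fun j => h1 j + h2 j) = binom_mean n p h1 + binom_mean n p h2.
Proof. unfold binom_mean; rewrite <- plus_sum; apply sum_eq; intros; ring. Qed.

Lemma binom_mean_scal n p c h :
  binom_mean n p (fun j => c * h j) = c * binom_mean n p h.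
Proof. unfold binom_mean; rewrite scal_sum; apply sum_eq; intros; ring. Qed.

Lemma binomial_ge0 n k : 0 <= Binomial.C n k.
Proof.
  apply Rle_mult_inv_pos; [apply pos_INR|].
  apply Rmult_lt_0_compat; apply lt_0_INR, Factorial.lt_O_fact.
Qed.

Lemma binom_weight_ge0 n p j : 0 <= p <= 1 -> 0 <= binom_weight n p j.
Proof.
  intros Hp; apply Rmult_le_pos; [apply Rmult_le_pos|];
    [apply binomial_ge0 | apply pow_le; lra | apply pow_le; lra].
Qed.

Lemma binom_mean_le n p h1 h2 : 0 <= p <= 1 ->
  (forall j, (j <= n)%nat -> h1 j <= h2 j) -> binom_mean n p h1 <= binom_mean n p h2.
Proof.
  intros Hp H; apply sum_Rle; intros j Hj.
  apply Rmult_le_compat_l; [apply binom_weight_ge0|]; auto.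
Qed.

Lemma binom_weight_S n p i : (i < n)%nat ->
  binom_weight (S n) p (S i) = p * binom_weight n p i + (1 - p) * binom_weight n p (S i).
Proof.
  intros H; unfold binom_weight; rewrite <- pascal by auto.
  replace (S n - S i)%nat with (S (n - S i)) by lia.
  replace (n - i)%nat with (S (n - S i)) by lia.
  simpl; ring.
Qed.

(* Conditioning on the outcome of the last of the n + 1 trials. *)
Lemma binom_mean_S n p h :
  binom_mean (S n) p h = binom_mean n p (fun j => p * h (S j) + (1 - p) * h j).
Proof.
  destruct n as [|n].
  { unfold binom_mean, binom_weight; simpl; rewrite !C_n_0, !C_n_n; ring. }
  unfold binom_mean.
  rewrite (sum_eq (fun j => binom_weight (S n) p j * (p * h (S j) + (1 - p) * h j))
                  (fun j => p * (binom_weight (S n) p j * h (S j))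
                            + (1 - p) * (binom_weight (S n) p j * h j)))
    by (intros; ring).
  rewrite plus_sum, (decomp_sum (fun j => binom_weight (S (S n)) p j * h j)),
    (decomp_sum (fun j => (1 - p) * (binom_weight (S n) p j * h j))) by lia.
  simpl Init.Nat.pred; rewrite tech5.
  rewrite (sum_eq (fun i => binom_weight (S (S n)) p (S i) * h (S i))
                  (fun i => p * (binom_weight (S n) p i * h (S i))
                            + (1 - p) * (binom_weight (S n) p (S i) * h (S i))))
    by (intros; rewrite binom_weight_S by lia; ring).
  rewrite plus_sum, (tech5 (fun i => p * (binom_weight (S n) p i * h (S i)))).
  assert (W0 : binom_weight (S (S n)) p 0 = (1 - p) * binom_weight (S n) p 0)
    by (unfold binom_weight; rewrite !C_n_0; simpl; ring).
  assert (WS : binom_weight (S (S n)) p (S (S n)) = p * binom_weight (S n) p (S n))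
    by (unfold binom_weight; rewrite !C_n_n, !Nat.sub_diag; simpl; ring).
  rewrite W0, WS; ring.
Qed.

Lemma binom_mean_const n p c : binom_mean n p (fun _ => c) = c.
Proof.
  induction n as [|n IH]; [unfold binom_mean, binom_weight; simpl; rewrite C_n_0; ring|].
  rewrite binom_mean_S; etransitivity; [|exact IH].
  apply binom_mean_ext; intros; ring.
Qed.

Lemma binom_mean_centred n p : binom_mean n p (fun j => INR j - INR n * p) = 0.
Proof.
  induction n as [|n IH]; [unfold binom_mean, binom_weight; simpl; ring|].
  rewrite binom_mean_S, <- IH; apply binom_mean_ext; intros; rewrite !S_INR; ring.
Qed.

Lemma binom_mean_centred_sq n p :
  binom_mean n p (fun j => (INR j - INR n * p) ^ 2) = INR n * p * (1 - p).
Proof.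
  induction n as [|n IH]; [unfold binom_mean, binom_weight; simpl; ring|].
  rewrite binom_mean_S.
  rewrite (binom_mean_ext _ _ _ (fun j => (INR j - INR n * p) ^ 2 + p * (1 - p)))
    by (intros; rewrite !S_INR; ring).
  rewrite binom_mean_plus, binom_mean_const, IH, S_INR; ring.
Qed.

Lemma binom_mean_centred_pow4 n p :
  binom_mean n p (fun j => (INR j - INR n * p) ^ 4)
  = 3 * INR n * (INR n - 1) * (p * (1 - p)) ^ 2
    + INR n * p * (1 - p) * (1 - 3 * p * (1 - p)).
Proof.
  induction n as [|n IH]; [unfold binom_mean, binom_weight; simpl; ring|].
  rewrite binom_mean_S.
  rewrite (binom_mean_ext _ _ _ (fun j => (INR j - INR n * p) ^ 4
             + (6 * p * (1 - p) * (INR j - INR n * p) ^ 2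
                + (4 * p * (1 - p) * ((1 - p) ^ 2 - p ^ 2) * (INR j - INR n * p)
                   + p * (1 - p) * (p ^ 3 + (1 - p) ^ 3)))))
    by (intros; rewrite !S_INR; ring).
  rewrite !binom_mean_plus, !binom_mean_scal, binom_mean_const, IH,
    binom_mean_centred_sq, binom_mean_centred, S_INR; ring.
Qed.

Lemma binom_mean_scaled_centred n p : (0 < n)%nat ->
  binom_mean n p (fun j => INR j / INR n - p) = 0.
Proof.
  intros Hn; assert (0 < INR n) by (apply lt_0_INR; auto).
  rewrite (binom_mean_ext _ _ _ (fun j => / INR n * (INR j - INR n * p)))
    by (intros; field; lra).
  rewrite binom_mean_scal, binom_mean_centred; ring.
Qed.

Lemma binom_mean_scaled_centred_sq n p : (0 < n)%nat ->
  binom_mean n p (fun j => (INR j / INR n - p) ^ 2) = p * (1 - p) / INR n.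
Proof.
  intros Hn; assert (0 < INR n) by (apply lt_0_INR; auto).
  rewrite (binom_mean_ext _ _ _ (fun j => / INR n ^ 2 * (INR j - INR n * p) ^ 2))
    by (intros; field; lra).
  rewrite binom_mean_scal, binom_mean_centred_sq; field; lra.
Qed.

Lemma binom_mean_scaled_centred_pow4_le n p : (0 < n)%nat -> 0 <= p <= 1 ->
  binom_mean n p (fun j => (INR j / INR n - p) ^ 4) <= / INR n ^ 2.
Proof.
  intros Hn Hp; assert (1 <= INR n) by (apply (le_INR 1); lia).
  rewrite (binom_mean_ext _ _ _ (fun j => / INR n ^ 4 * (INR j - INR n * p) ^ 4))
    by (intros; field; lra).
  rewrite binom_mean_scal, binom_mean_centred_pow4.
  assert (Hq : 0 <= p * (1 - p) <= / 4)
    by (pose proof (pow2_ge_0 (2 * p - 1)); split; nra).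
  replace (/ INR n ^ 2) with (/ INR n ^ 4 * INR n ^ 2) by (field; lra).
  apply Rmult_le_compat_l; [apply Rlt_le, Rinv_0_lt_compat, pow_lt; lra|].
  set (q := p * (1 - p)) in *.
  replace (3 * INR n * (INR n - 1) * q ^ 2 + INR n * p * (1 - p) * (1 - 3 * p * (1 - p)))
    with (3 * (INR n * (INR n - 1)) * q ^ 2 + INR n * (q * (1 - 3 * q))) by (unfold q; ring).
  assert (q ^ 2 <= / 16) by nra.
  assert (0 <= INR n * (INR n - 1) <= INR n ^ 2) by nra.
  assert (INR n * (q * (1 - 3 * q)) <= INR n ^ 2 / 4) by nra.
  nra.
Qed.

(** * The two-dimensional Bernstein operator *)

Lemma bernstein2_binom_mean N N2 g x1 x2 :
  bernstein2 N N2 g x1 x2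
  = binom_mean N x1 (fun j1 =>
      binom_mean N2 x2 (fun j2 => g (INR j1 / INR N) (INR j2 / INR N2))).
Proof.
  unfold bernstein2, binom_mean; apply sum_eq; intros j1 _.
  rewrite scal_sum; apply sum_eq; intros j2 _; unfold binom_weight; ring.
Qed.

(* For n = 0 this also holds, since Rocq's [INR 0 / INR 0] is [0]. *)
Lemma grid_point_unit j n : (j <= n)%nat -> 0 <= INR j / INR n <= 1.
Proof.
  intros Hj; destruct (Nat.eq_0_gt_0_cases n) as [->|Hn].
  - replace j with 0%nat by lia; unfold Rdiv; simpl; lra.
  - assert (INR j <= INR n) by (apply le_INR; auto).
    assert (0 < INR n) by (apply lt_0_INR; auto).
    split; [apply Rle_mult_inv_pos; [apply pos_INR | lra]|].
    apply Rmult_le_reg_r with (INR n); [lra|]; field_simplify; lra.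
Qed.

Lemma bernstein2_ext N N2 g h x1 x2 :
  (forall y1 y2, 0 <= y1 <= 1 -> 0 <= y2 <= 1 -> g y1 y2 = h y1 y2) ->
  bernstein2 N N2 g x1 x2 = bernstein2 N N2 h x1 x2.
Proof.
  intros H; rewrite !bernstein2_binom_mean.
  apply binom_mean_ext; intros j1 Hj1; apply binom_mean_ext; intros j2 Hj2.
  apply H; apply grid_point_unit; auto.
Qed.

Lemma bernstein2_plus N N2 g h x1 x2 :
  bernstein2 N N2 (fun y1 y2 => g y1 y2 + h y1 y2) x1 x2
  = bernstein2 N N2 g x1 x2 + bernstein2 N N2 h x1 x2.
Proof.
  rewrite !bernstein2_binom_mean, <- binom_mean_plus.
  apply binom_mean_ext; intros; apply binom_mean_plus.
Qed.

Lemma bernstein2_scal N N2 c g x1 x2 :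
  bernstein2 N N2 (fun y1 y2 => c * g y1 y2) x1 x2 = c * bernstein2 N N2 g x1 x2.
Proof.
  rewrite !bernstein2_binom_mean, <- binom_mean_scal.
  apply binom_mean_ext; intros; apply binom_mean_scal.
Qed.

Lemma bernstein2_const N N2 c x1 x2 : bernstein2 N N2 (fun _ _ => c) x1 x2 = c.
Proof.
  rewrite bernstein2_binom_mean; etransitivity; [|apply (binom_mean_const N x1 c)].
  apply binom_mean_ext; intros; apply binom_mean_const.
Qed.

Lemma bernstein2_le N N2 g h x1 x2 : 0 <= x1 <= 1 -> 0 <= x2 <= 1 ->
  (forall y1 y2, 0 <= y1 <= 1 -> 0 <= y2 <= 1 -> g y1 y2 <= h y1 y2) ->
  bernstein2 N N2 g x1 x2 <= bernstein2 N N2 h x1 x2.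
Proof.
  intros Hx1 Hx2 H; rewrite !bernstein2_binom_mean.
  apply binom_mean_le; auto; intros j1 Hj1; apply binom_mean_le; auto; intros j2 Hj2.
  apply H; apply grid_point_unit; auto.
Qed.

Lemma bernstein2_abs_le N N2 g x1 x2 : 0 <= x1 <= 1 -> 0 <= x2 <= 1 ->
  Rabs (bernstein2 N N2 g x1 x2) <= bernstein2 N N2 (fun y1 y2 => Rabs (g y1 y2)) x1 x2.
Proof.
  intros Hx1 Hx2; apply Rabs_le; split.
  - replace (- _) with (bernstein2 N N2 (fun y1 y2 => -1 * Rabs (g y1 y2)) x1 x2)
      by (rewrite bernstein2_scal; ring).
    apply bernstein2_le; auto; intros y1 y2 _ _.
    pose proof (proj1 (Rabs_le_between (g y1 y2) _) (Rle_refl _)); lra.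
  - apply bernstein2_le; auto; intros; apply Rle_abs.
Qed.

Lemma bernstein2_quadratic N N2 x1 x2 k0 k1 k2 k3 k4 k5 :
  (0 < N)%nat -> (0 < N2)%nat ->
  bernstein2 N N2 (fun y1 y2 =>
      k0 + k1 * (y1 - x1) + k2 * (y2 - x2) + k3 * (y1 - x1) ^ 2
      + k4 * (y2 - x2) ^ 2 + k5 * (y1 - x1) * (y2 - x2)) x1 x2
  = k0 + k3 * (x1 * (1 - x1) / INR N) + k4 * (x2 * (1 - x2) / INR N2).
Proof.
  intros HN HN2; rewrite bernstein2_binom_mean.
  set (a j1 := INR j1 / INR N - x1); set (b j2 := INR j2 / INR N2 - x2).
  rewrite (binom_mean_ext _ _ _ (fun j1 => k1 * a j1 + (k3 * a j1 ^ 2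
             + (k0 + k4 * (x2 * (1 - x2) / INR N2))))).
  { rewrite !binom_mean_plus, !binom_mean_scal, !binom_mean_const.
    unfold a; rewrite binom_mean_scaled_centred, binom_mean_scaled_centred_sq by auto; ring. }
  intros j1 _.
  rewrite (binom_mean_ext _ _ _ (fun j2 => (k2 + k5 * a j1) * b j2 + (k4 * b j2 ^ 2
             + (k0 + k1 * a j1 + k3 * a j1 ^ 2)))) by (intros; unfold a, b; ring).
  rewrite !binom_mean_plus, !binom_mean_scal, !binom_mean_const.
  unfold b; rewrite binom_mean_scaled_centred, binom_mean_scaled_centred_sq by auto; ring.
Qed.

Definition qform (k1 k2 k3 u v : R) : R := k1 * u ^ 2 + k2 * v ^ 2 + k3 * u * v.

Lemma bernstein2_affine_quadratic N N2 x1 x2 l1 l2 k1 k2 k3 p0 pa pb r0 ra rb :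
  (0 < N)%nat -> (0 < N2)%nat ->
  bernstein2 N N2 (fun y1 y2 =>
      let u := p0 + pa * (y1 - x1) + pb * (y2 - x2) in
      let v := r0 + ra * (y1 - x1) + rb * (y2 - x2) in
      l1 * u + l2 * v + qform k1 k2 k3 u v) x1 x2
  = l1 * p0 + l2 * r0 + qform k1 k2 k3 p0 r0
    + qform k1 k2 k3 pa ra * (x1 * (1 - x1) / INR N)
    + qform k1 k2 k3 pb rb * (x2 * (1 - x2) / INR N2).
Proof.
  intros HN HN2.
  rewrite (bernstein2_ext _ _ _ (fun y1 y2 =>
      (l1 * p0 + l2 * r0 + qform k1 k2 k3 p0 r0)
      + (l1 * pa + l2 * ra + 2 * k1 * p0 * pa + 2 * k2 * r0 * ra + k3 * (p0 * ra + pa * r0))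
        * (y1 - x1)
      + (l1 * pb + l2 * rb + 2 * k1 * p0 * pb + 2 * k2 * r0 * rb + k3 * (p0 * rb + pb * r0))
        * (y2 - x2)
      + qform k1 k2 k3 pa ra * (y1 - x1) ^ 2 + qform k1 k2 k3 pb rb * (y2 - x2) ^ 2
      + (2 * k1 * pa * pb + 2 * k2 * ra * rb + k3 * (pa * rb + pb * ra)) * (y1 - x1) * (y2 - x2)))
    by (intros; unfold qform; ring).
  rewrite bernstein2_quadratic by auto; ring.
Qed.

Lemma bernstein2_pow4_le N N2 x1 x2 : (0 < N)%nat -> (0 < N2)%nat ->
  0 <= x1 <= 1 -> 0 <= x2 <= 1 ->
  bernstein2 N N2 (fun y1 y2 => (y1 - x1) ^ 4 + (y2 - x2) ^ 4) x1 x2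
  <= / INR N ^ 2 + / INR N2 ^ 2.
Proof.
  intros HN HN2 Hx1 Hx2; rewrite bernstein2_plus, !bernstein2_binom_mean.
  rewrite binom_mean_const.
  rewrite (binom_mean_ext _ _ _ (fun j1 => (INR j1 / INR N - x1) ^ 4))
    by (intros; apply binom_mean_const).
  apply Rplus_le_compat; apply binom_mean_scaled_centred_pow4_le; auto.
Qed.

(** * Second-order Taylor expansion *)

Lemma rolle_between (F dF : R -> R) a b : a <> b ->
  (forall t, is_derive F t (dF t)) -> F a = F b ->
  exists c, Rmin a b < c < Rmax a b /\ dF c = 0.
Proof.
  intros Hab HF HFab.
  destruct (Rlt_or_le a b) as [Hlt | Hle].
  - destruct (MVT_cor2 F dF a b Hlt (fun c _ => proj1 (is_derive_Reals _ _ _) (HF c)))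
      as [c [Hc Hbetween]].
    exists c; rewrite Rmin_left, Rmax_right by lra; split; [lra|].
    apply Rmult_eq_reg_r with (b - a); lra.
  - destruct (MVT_cor2 F dF b a ltac:(lra) (fun c _ => proj1 (is_derive_Reals _ _ _) (HF c)))
      as [c [Hc Hbetween]].
    exists c; rewrite Rmin_right, Rmax_left by lra; split; [lra|].
    apply Rmult_eq_reg_r with (a - b); lra.
Qed.

Lemma taylor1_lagrange (g : R -> R) a b :
  (forall t, ex_derive g t) -> (forall t, ex_derive (Derive g) t) ->
  exists c, Rabs (c - a) <= Rabs (b - a) /\
    g b = g a + Derive g a * (b - a) + / 2 * Derive (Derive g) c * (b - a) ^ 2.
Proof.
  intros Hg Hg'.
  destruct (Req_dec a b) as [<- | Hab]; [exists a; split; [lra | ring]|].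
  assert (Hba : b - a <> 0) by lra.
  set (K := (g b - g a - Derive g a * (b - a)) / (b - a) ^ 2).
  set (F t := g b - g t - Derive g t * (b - t) - K * (b - t) ^ 2).
  (* [K] makes [F a = F b = 0], so Rolle's theorem forces [Derive (Derive g) c = 2 K]. *)
  assert (HF : forall t, is_derive F t ((b - t) * (2 * K - Derive (Derive g) t))).
  { intros t; unfold F; auto_derive; [repeat split; auto|].
    change (fun x => g x) with g; change (fun x => Derive g x) with (Derive g); ring. }
  assert (HFab : F a = F b) by (unfold F, K; field; auto).
  destruct (rolle_between F _ a b Hab HF HFab) as [c [Hc Hc0]].
  assert (Hcb : c <> b) by (unfold Rmin, Rmax in Hc; destruct Rle_dec; lra).
  exists c; split; [unfold Rmin, Rmax in Hc; destruct Rle_dec; split_Rabs; lra|].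
  assert (HK : Derive (Derive g) c = 2 * K).
  { apply Rmult_integral in Hc0; destruct Hc0; lra. }
  rewrite HK; unfold K; field; auto.
Qed.

Definition hess_form (f : R -> R -> R) (x1 x2 : R) : R -> R -> R :=
  qform (/ 2 * D1 (D1 f) x1 x2) (/ 2 * D2 (D2 f) x1 x2) (D2 (D1 f) x1 x2).

Definition taylor2_poly (f : R -> R -> R) (x1 x2 z1 z2 : R) : R :=
  f x1 x2 + D1 f x1 x2 * (z1 - x1) + D2 f x1 x2 * (z2 - x2)
  + hess_form f x1 x2 (z1 - x1) (z2 - x2).

(* Expand in [z1] along the line [z2 = const], then in [z2] at [z1 = x1]; the
   first-order term [D1 f x1 z2] is brought back to [x2] by the mean value theorem. *)
Lemma taylor2_lagrange f x1 x2 z1 z2 : C2_R2 f ->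
  exists xi eta zeta,
    Rabs (xi - x1) <= Rabs (z1 - x1) /\ Rabs (eta - x2) <= Rabs (z2 - x2) /\
    Rabs (zeta - x2) <= Rabs (z2 - x2) /\
    f z1 z2 - taylor2_poly f x1 x2 z1 z2
    = qform (/ 2 * (D1 (D1 f) xi z2 - D1 (D1 f) x1 x2))
            (/ 2 * (D2 (D2 f) x1 eta - D2 (D2 f) x1 x2))
            (D2 (D1 f) x1 zeta - D2 (D1 f) x1 x2) (z1 - x1) (z2 - x2).
Proof.
  intros [Hf [Hf1 Hf2]].
  destruct (taylor1_lagrange (fun t => f t z2) x1 z1) as [xi [Hxi Exi]];
    [intros t; apply (Hf t z2) | intros t; apply (Hf1 t z2) |].
  destruct (taylor1_lagrange (fun t => f x1 t) x2 z2) as [eta [Heta Eeta]];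
    [intros t; apply (Hf x1 t) | intros t; apply (Hf2 x1 t) |].
  destruct (MVT_cor4 (D1 f x1) (D2 (D1 f) x1) x2 (Rabs (z2 - x2))) with (b := z2)
    as [zeta [Ezeta Hzeta]]; [intros c _; apply Derive_correct, (Hf1 x1 c) | lra |].
  exists xi, eta, zeta; do 3 (split; [assumption|]).
  change (f z1 z2 = f x1 z2 + D1 f x1 z2 * (z1 - x1)
                    + / 2 * D1 (D1 f) xi z2 * (z1 - x1) ^ 2) in Exi.
  change (f x1 z2 = f x1 x2 + D2 f x1 x2 * (z2 - x2)
                    + / 2 * D2 (D2 f) x1 eta * (z2 - x2) ^ 2) in Eeta.
  unfold taylor2_poly, hess_form, qform.
  rewrite Exi, Eeta.
  replace (D1 f x1 z2) with (D1 f x1 x2 + D2 (D1 f) x1 zeta * (z2 - x2)) by lra.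
  ring.
Qed.

Definition sqdist (x1 x2 z1 z2 : R) : R := (z1 - x1) ^ 2 + (z2 - x2) ^ 2.

Lemma sq_le_of_abs_le a b : Rabs a <= Rabs b -> a ^ 2 <= b ^ 2.
Proof.
  intros H; rewrite <- (pow2_abs a), <- (pow2_abs b); apply pow_incr.
  split; auto using Rabs_pos.
Qed.

Lemma qform_half_abs_le A B C u v W :
  Rabs A <= W -> Rabs B <= W -> Rabs C <= W ->
  Rabs (qform (/ 2 * A) (/ 2 * B) C u v) <= W * (u ^ 2 + v ^ 2).
Proof.
  intros HA HB HC; unfold qform.
  assert (Huv : Rabs u * Rabs v <= (u ^ 2 + v ^ 2) / 2).
  { rewrite <- (pow2_abs u), <- (pow2_abs v); pose proof (pow2_ge_0 (Rabs u - Rabs v)); nra. }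
  eapply Rle_trans; [apply Rabs_triang|].
  eapply Rle_trans; [apply Rplus_le_compat_r, Rabs_triang|].
  rewrite !Rabs_mult, Rabs_pos_eq, <- !RPow_abs, !pow2_abs by lra.
  pose proof (pow2_ge_0 u); pose proof (pow2_ge_0 v).
  pose proof (Rabs_pos u); pose proof (Rabs_pos v); pose proof (Rabs_pos C).
  assert (Rabs C * Rabs u * Rabs v <= W * ((u ^ 2 + v ^ 2) / 2))
    by (rewrite Rmult_assoc; apply Rmult_le_compat; nra).
  nra.
Qed.

(* Uniform continuity bounds the increments of [g] along the [n] steps of the
   segment from the corner [(a1, a2)] to [(u, v)]. *)
Lemma continuity_2d_bounded g a1 b1 a2 b2 : a1 <= b1 -> a2 <= b2 ->
  (forall u v, a1 <= u <= b1 -> a2 <= v <= b2 -> continuity_2d_pt g u v) ->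
  exists K, forall u v, a1 <= u <= b1 -> a2 <= v <= b2 -> Rabs (g u v) <= K.
Proof.
  intros Hab1 Hab2 Hc.
  destruct (uniform_continuity_2d g a1 b1 a2 b2 Hc (mkposreal 1 Rlt_0_1)) as [[del Hdel] Hu].
  simpl in Hu.
  destruct (INR_unbounded ((b1 - a1 + b2 - a2) / del)) as [n Hn].
  assert (Hn' : b1 - a1 + b2 - a2 < INR n * del).
  { apply Rmult_lt_compat_r with (r := del) in Hn; [|lra].
    unfold Rdiv in Hn; rewrite Rmult_assoc, Rinv_l in Hn; lra. }
  assert (Hnpos : 0 < INR n) by nra.
  assert (Hsmall : forall w, 0 <= w <= b1 - a1 + b2 - a2 -> Rabs (w / INR n) < del).
  { intros w Hw; rewrite Rabs_pos_eq by (apply Rle_mult_inv_pos; lra).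
    apply Rmult_lt_reg_r with (INR n); [lra|]; field_simplify; lra. }
  exists (Rabs (g a1 a2) + INR n); intros u v Hu1 Hv2.
  set (p k := a1 + INR k / INR n * (u - a1)); set (q k := a2 + INR k / INR n * (v - a2)).
  assert (Hclose : forall k, (k < n)%nat -> Rabs (g (p (S k)) (q (S k)) - g (p k) (q k)) < 1).
  { intros k Hk.
    assert (0 <= INR k / INR n <= 1 /\ 0 <= INR (S k) / INR n <= 1)
      by (split; apply grid_point_unit; lia).
    assert (Hp : p (S k) - p k = (u - a1) / INR n) by (unfold p; rewrite S_INR; field; lra).
    assert (Hq : q (S k) - q k = (v - a2) / INR n) by (unfold q; rewrite S_INR; field; lra).
    apply Hu; try (unfold p; nra); try (unfold q; nra);
      [rewrite Hp | rewrite Hq]; apply Hsmall; lra. }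
  assert (Hchain : forall k, (k <= n)%nat -> Rabs (g (p k) (q k) - g a1 a2) <= INR k).
  { induction k as [|k IH]; intros Hk.
    - unfold p, q; simpl; unfold Rdiv; rewrite !Rmult_0_l, !Rplus_0_r, Rminus_diag, Rabs_R0.
      lra.
    - rewrite S_INR; specialize (IH ltac:(lia)); specialize (Hclose k ltac:(lia)).
      pose proof (Rabs_triang (g (p (S k)) (q (S k)) - g (p k) (q k)) (g (p k) (q k) - g a1 a2)).
      replace (g (p (S k)) (q (S k)) - g (p k) (q k) + (g (p k) (q k) - g a1 a2))
        with (g (p (S k)) (q (S k)) - g a1 a2) in * by ring.
      lra. }
  specialize (Hchain n (Nat.le_refl n)).
  replace (p n) with u in Hchain by (unfold p; field; lra).
  replace (q n) with v in Hchain by (unfold q; field; lra).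
  pose proof (Rabs_triang_inv (g u v) (g a1 a2)); lra.
Qed.

(* Near [x] the modulus of continuity applies; far from [x], where [del ^ 2 <= s],
   the crude bound [2 K] is dominated by [2 K s / del ^ 2]. *)
Lemma oscillation_le_near_far g x1 x2 u v s eps del K : 0 < del ->
  (forall u v, Rabs (u - x1) < del -> Rabs (v - x2) < del -> Rabs (g u v - g x1 x2) < eps) ->
  Rabs (g u v) <= K -> Rabs (g x1 x2) <= K -> sqdist x1 x2 u v <= s ->
  Rabs (g u v - g x1 x2) <= eps + 2 * K * s / del ^ 2.
Proof.
  intros Hdel Hc Hu Hx Hs; unfold sqdist in Hs.
  assert (Heps : 0 <= eps).
  { assert (Rabs (g x1 x2 - g x1 x2) < eps) by (apply Hc; rewrite Rminus_diag, Rabs_R0; lra).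
    pose proof (Rabs_pos (g x1 x2 - g x1 x2)); lra. }
  assert (HK : 0 <= K) by (pose proof (Rabs_pos (g x1 x2)); lra).
  assert (Hs0 : 0 <= s) by (pose proof (pow2_ge_0 (u - x1)); pose proof (pow2_ge_0 (v - x2)); lra).
  assert (Hfar : del ^ 2 <= s -> Rabs (g u v - g x1 x2) <= eps + 2 * K * s / del ^ 2).
  { intros Hd.
    assert (2 * K <= 2 * K * s / del ^ 2)
      by (apply Rmult_le_reg_r with (del ^ 2); [nra|]; field_simplify; nra).
    pose proof (Rabs_triang (g u v) (- g x1 x2)); rewrite Rabs_Ropp in *; unfold Rminus; lra. }
  destruct (Rlt_or_le (Rabs (u - x1)) del) as [H1 | H1];
    [destruct (Rlt_or_le (Rabs (v - x2)) del) as [H2 | H2]|].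
  - assert (0 <= 2 * K * s / del ^ 2) by (apply Rle_mult_inv_pos; nra).
    pose proof (Hc u v H1 H2); lra.
  - apply Hfar; rewrite <- (pow2_abs (v - x2)) in Hs; pose proof (pow2_ge_0 (u - x1)); nra.
  - apply Hfar; rewrite <- (pow2_abs (u - x1)) in Hs; pose proof (pow2_ge_0 (v - x2)); nra.
Qed.

Lemma C2_R2_hessian_bounded f x1 x2 rho : C2_R2 f -> 0 <= rho ->
  exists K, forall u v, Rabs (u - x1) <= rho -> Rabs (v - x2) <= rho ->
    Rabs (D1 (D1 f) u v) <= K /\ Rabs (D2 (D2 f) u v) <= K /\ Rabs (D2 (D1 f) u v) <= K.
Proof.
  intros (_ & Hf1 & Hf2) Hrho.
  destruct (continuity_2d_bounded
              (fun u v => Rabs (D1 (D1 f) u v) + Rabs (D2 (D2 f) u v) + Rabs (D2 (D1 f) u v))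
              (x1 - rho) (x1 + rho) (x2 - rho) (x2 + rho)) as [K HK]; [lra | lra | |].
  { intros u v _ _.
    repeat apply continuity_2d_pt_plus; apply continuity_1d_2d_pt_comp;
      solve [apply Rcontinuity_abs | apply Hf1 | apply Hf2]. }
  exists K; intros u v Hu Hv; apply Rabs_le_between in Hu; apply Rabs_le_between in Hv.
  specialize (HK u v ltac:(lra) ltac:(lra)).
  rewrite Rabs_pos_eq in HK by (repeat apply Rplus_le_le_0_compat; apply Rabs_pos).
  pose proof (Rabs_pos (D1 (D1 f) u v)); pose proof (Rabs_pos (D2 (D2 f) u v));
    pose proof (Rabs_pos (D2 (D1 f) u v)); lra.
Qed.

Lemma C2_R2_hessian_modulus f x1 x2 eps : C2_R2 f -> 0 < eps ->
  exists del, 0 < del /\ forall u v, Rabs (u - x1) < del -> Rabs (v - x2) < del ->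
    Rabs (D1 (D1 f) u v - D1 (D1 f) x1 x2) < eps /\
    Rabs (D2 (D2 f) u v - D2 (D2 f) x1 x2) < eps /\
    Rabs (D2 (D1 f) u v - D2 (D1 f) x1 x2) < eps.
Proof.
  intros (_ & Hf1 & Hf2) Heps.
  destruct (proj1 (proj2 (proj2 (proj2 (Hf1 x1 x2)))) (mkposreal eps Heps)) as [d1 H1].
  destruct (proj2 (proj2 (proj2 (proj2 (Hf2 x1 x2)))) (mkposreal eps Heps)) as [d2 H2].
  destruct (proj2 (proj2 (proj2 (proj2 (Hf1 x1 x2)))) (mkposreal eps Heps)) as [d3 H3].
  exists (Rmin d1 (Rmin d2 d3)); split.
  { destruct d1, d2, d3; simpl; repeat apply Rmin_pos; auto. }
  intros u v Hu Hv.
  pose proof (Rmin_l d1 (Rmin d2 d3)); pose proof (Rmin_r d1 (Rmin d2 d3));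
    pose proof (Rmin_l d2 d3); pose proof (Rmin_r d2 d3).
  split; [|split]; [apply H1 | apply H2 | apply H3]; lra.
Qed.

Lemma taylor2_remainder_le f x1 x2 rho : C2_R2 f -> 0 <= rho ->
  forall eps, 0 < eps -> exists C, 0 <= C /\ forall z1 z2,
    Rabs (z1 - x1) <= rho -> Rabs (z2 - x2) <= rho ->
    Rabs (f z1 z2 - taylor2_poly f x1 x2 z1 z2)
    <= eps * sqdist x1 x2 z1 z2 + C * sqdist x1 x2 z1 z2 ^ 2.
Proof.
  intros Hf Hrho eps Heps.
  destruct (C2_R2_hessian_modulus f x1 x2 eps Hf Heps) as (del & Hdel & Hmod).
  destruct (C2_R2_hessian_bounded f x1 x2 rho Hf Hrho) as [K HK].
  destruct (HK x1 x2) as (K1x & K2x & K3x); [rewrite Rminus_diag, Rabs_R0; lra .. |].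
  exists (2 * K / del ^ 2); split.
  { apply Rle_mult_inv_pos; [pose proof (Rabs_pos (D2 (D1 f) x1 x2)) |]; nra. }
  intros z1 z2 Hz1 Hz2.
  destruct (taylor2_lagrange f x1 x2 z1 z2 Hf) as (xi & eta & zeta & Hxi & Heta & Hzeta & ->).
  set (s := sqdist x1 x2 z1 z2).
  assert (Hs1 : sqdist x1 x2 xi z2 <= s)
    by (unfold s, sqdist; apply Rplus_le_compat_r, sq_le_of_abs_le; auto).
  assert (Hs2 : forall w, Rabs (w - x2) <= Rabs (z2 - x2) -> sqdist x1 x2 x1 w <= s).
  { intros w Hw; unfold s, sqdist; rewrite Rminus_diag.
    pose proof (pow2_ge_0 (z1 - x1)); pose proof (sq_le_of_abs_le _ _ Hw); simpl; lra. }
  replace (eps * s + 2 * K / del ^ 2 * s ^ 2) with ((eps + 2 * K * s / del ^ 2) * s)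
    by (field; lra).
  assert (Hx1 : Rabs (x1 - x1) <= rho) by (rewrite Rminus_diag, Rabs_R0; lra).
  apply qform_half_abs_le.
  - destruct (HK xi z2) as (K1 & _ & _); [lra | lra |].
    apply oscillation_le_near_far; auto; intros u v Hu Hv; apply (Hmod u v Hu Hv).
  - destruct (HK x1 eta) as (_ & K2 & _); [lra | lra |].
    apply oscillation_le_near_far; auto; intros u v Hu Hv; apply (Hmod u v Hu Hv).
  - destruct (HK x1 zeta) as (_ & _ & K3); [lra | lra |].
    apply oscillation_le_near_far; auto; intros u v Hu Hv; apply (Hmod u v Hu Hv).
Qed.

(** * Bernstein approximation of [f \o A] *)

Definition taylor_generator (d kappa : R) (f : R -> R -> R) (x1 x2 t : R) : R :=
  let e := x1 - x2 in
  D1 f x1 x2 * (- kappa * d * e) + D2 f x1 x2 * (kappa * e)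
  + t * hess_form f x1 x2 (- kappa * d * e) (kappa * e)
  + hess_form f x1 x2 (1 - kappa * d * t) (kappa * t) * (x1 * (1 - x1))
  + hess_form f x1 x2 (kappa * d * t) (1 - kappa * t) * (x2 * (1 - x2)) / d.

Lemma bernstein2_compA_taylor2_poly d kappa f x1 x2 N N2 :
  0 < d -> (0 < N)%nat -> INR N2 = d * INR N ->
  INR N * (bernstein2 N N2 (compA d kappa N (taylor2_poly f x1 x2)) x1 x2 - f x1 x2)
  = taylor_generator d kappa f x1 x2 (/ INR N).
Proof.
  intros Hd HN HN2.
  assert (Hn : 0 < INR N) by (apply lt_0_INR; auto).
  assert (HN2pos : (0 < N2)%nat) by (apply INR_lt; simpl; nra).
  set (c := kappa / INR N).
  rewrite (bernstein2_ext _ _ _ (fun y1 y2 => f x1 x2 +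
      let u := - c * d * (x1 - x2) + (1 - c * d) * (y1 - x1) + c * d * (y2 - x2) in
      let v := c * (x1 - x2) + c * (y1 - x1) + (1 - c) * (y2 - x2) in
      D1 f x1 x2 * u + D2 f x1 x2 * v + hess_form f x1 x2 u v))
    by (intros; unfold compA, taylor2_poly, hess_form, qform, c; cbv zeta; ring).
  rewrite bernstein2_plus, bernstein2_const; unfold hess_form.
  rewrite bernstein2_affine_quadratic by auto.
  unfold taylor_generator, hess_form, qform, c; cbv zeta; rewrite HN2; field; lra.
Qed.

Lemma taylor_generator_0 d kappa f x1 x2 : 0 < d ->
  taylor_generator d kappa f x1 x2 0 = Ld d kappa f x1 x2.
Proof. intros Hd; unfold taylor_generator, hess_form, qform, Ld; field; lra. Qed.

Lemma taylor_generator_continuous d kappa f x1 x2 :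
  continuity (taylor_generator d kappa f x1 x2).
Proof. unfold taylor_generator, hess_form, qform; reg. Qed.

Lemma eventually_inv_INR_lt alp : 0 < alp ->
  exists N0, forall N, (N0 <= N)%nat -> (0 < N)%nat /\ / INR N < alp.
Proof.
  intros Halp; destruct (INR_unbounded (/ alp)) as [N0 HN0].
  assert (0 < / alp) by (apply Rinv_0_lt_compat; auto).
  exists N0; intros N HN; assert (HNN0 : INR N0 <= INR N) by (apply le_INR; auto).
  split; [apply INR_lt; simpl; lra|].
  rewrite <- (Rinv_inv alp); apply Rinv_lt_contravar; [apply Rmult_lt_0_compat|]; lra.
Qed.

Lemma main_term_limit d kappa f x1 x2 : 0 < d ->
  forall eps, 0 < eps -> exists N0, forall N N2, (N0 <= N)%nat -> INR N2 = d * INR N ->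
    Rabs (INR N * (bernstein2 N N2 (compA d kappa N (taylor2_poly f x1 x2)) x1 x2 - f x1 x2)
          - Ld d kappa f x1 x2) < eps.
Proof.
  intros Hd eps Heps.
  destruct (taylor_generator_continuous d kappa f x1 x2 0 eps Heps) as (alp & Halp & Hcont).
  destruct (eventually_inv_INR_lt alp Halp) as [N0 HN0].
  exists N0; intros N N2 HN HN2; destruct (HN0 N HN) as [Hpos Hlt].
  assert (0 < / INR N) by (apply Rinv_0_lt_compat, lt_0_INR; auto).
  rewrite bernstein2_compA_taylor2_poly, <- taylor_generator_0 by auto.
  apply Hcont; split; [split; [exact I | lra]|].
  simpl; unfold R_dist; rewrite Rminus_0_r, Rabs_pos_eq; lra.
Qed.

Lemma compA_sqdist_le d kappa N x1 x2 y1 y2 : 0 < d <= 1 -> 0 <= y1 <= 1 -> 0 <= y2 <= 1 ->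
  compA d kappa N (sqdist x1 x2) y1 y2
  <= 2 * (y1 - x1) ^ 2 + 2 * (y2 - x2) ^ 2 + 4 * (kappa / INR N) ^ 2.
Proof.
  intros Hd Hy1 Hy2; unfold compA, sqdist.
  set (c := kappa / INR N); set (w := y1 - y2).
  replace (y1 - c * (d * y1 - d * y2) - x1) with (y1 - x1 - c * (d * w)) by (unfold w; ring).
  replace (y2 - c * (- y1 + y2) - x2) with (y2 - x2 + c * w) by (unfold w; ring).
  assert (Hdw : -1 <= d * w <= 1) by (unfold w; split; nra).
  assert (0 <= c ^ 2 * (1 - (d * w) ^ 2)) by (apply Rmult_le_pos; [apply pow2_ge_0 | nra]).
  assert (0 <= c ^ 2 * (1 - w ^ 2)) by (apply Rmult_le_pos; [apply pow2_ge_0 | unfold w; nra]).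
  pose proof (pow2_ge_0 (y1 - x1 + c * (d * w))); pose proof (pow2_ge_0 (y2 - x2 - c * w)).
  nra.
Qed.

Lemma compA_grid_near d kappa N x1 x2 y1 y2 :
  0 < d <= 1 -> 0 < kappa -> (0 < N)%nat ->
  0 <= x1 <= 1 -> 0 <= x2 <= 1 -> 0 <= y1 <= 1 -> 0 <= y2 <= 1 ->
  Rabs (y1 - kappa / INR N * (d * y1 - d * y2) - x1) <= 1 + kappa /\
  Rabs (y2 - kappa / INR N * (- y1 + y2) - x2) <= 1 + kappa.
Proof.
  intros Hd Hk HN Hx1 Hx2 Hy1 Hy2.
  assert (Hc : 0 < kappa / INR N <= kappa).
  { assert (1 <= INR N) by (apply (le_INR 1); lia).
    split; [apply Rdiv_lt_0_compat; lra|].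
    apply Rmult_le_reg_r with (INR N); [lra|]; field_simplify; nra. }
  set (c := kappa / INR N) in *.
  assert (Hdw : -1 <= d * y1 - d * y2 <= 1) by (split; nra).
  assert (- c <= c * (d * y1 - d * y2) <= c) by (split; nra).
  assert (- c <= c * (- y1 + y2) <= c) by (split; nra).
  split; apply Rabs_le_between; lra.
Qed.

Lemma bernstein2_compA_sqdist_le d kappa N N2 x1 x2 :
  0 < d <= 1 -> (0 < N)%nat -> INR N2 = d * INR N -> 0 <= x1 <= 1 -> 0 <= x2 <= 1 ->
  INR N * bernstein2 N N2 (compA d kappa N (sqdist x1 x2)) x1 x2
  <= 1 + / d + 4 * kappa ^ 2.
Proof.
  intros Hd HN HN2 Hx1 Hx2.
  assert (Hn : 1 <= INR N) by (apply (le_INR 1); lia).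
  assert (HN2pos : (0 < N2)%nat) by (apply INR_lt; simpl; nra).
  set (c := kappa / INR N).
  assert (Hle : bernstein2 N N2 (compA d kappa N (sqdist x1 x2)) x1 x2
                <= bernstein2 N N2 (fun y1 y2 => 4 * c ^ 2 + 0 * (y1 - x1) + 0 * (y2 - x2)
                     + 2 * (y1 - x1) ^ 2 + 2 * (y2 - x2) ^ 2 + 0 * (y1 - x1) * (y2 - x2)) x1 x2).
  { apply bernstein2_le; auto; intros y1 y2 Hy1 Hy2.
    eapply Rle_trans; [apply compA_sqdist_le; auto | right; unfold c; ring]. }
  rewrite bernstein2_quadratic in Hle by auto.
  apply Rle_trans with (INR N * (4 * c ^ 2 + 2 * (x1 * (1 - x1) / INR N)
                                 + 2 * (x2 * (1 - x2) / INR N2))); [apply Rmult_le_compat_l; lra|].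
  replace (INR N * (4 * c ^ 2 + 2 * (x1 * (1 - x1) / INR N) + 2 * (x2 * (1 - x2) / INR N2)))
    with (4 * kappa ^ 2 * / INR N + 2 * (x1 * (1 - x1)) + 2 * (x2 * (1 - x2)) * / d)
    by (unfold c; rewrite HN2; field; lra).
  assert (0 < / INR N <= 1)
    by (split; [apply Rinv_0_lt_compat | rewrite <- Rinv_1; apply Rinv_le_contravar]; lra).
  assert (0 < / d) by (apply Rinv_0_lt_compat; lra).
  assert (x1 * (1 - x1) <= 1 / 2 /\ 0 <= x2 * (1 - x2) <= 1 / 2) by (repeat split; nra).
  pose proof (pow2_ge_0 kappa); nra.
Qed.

Lemma bernstein2_compA_sqdist_sq_le d kappa N N2 x1 x2 :
  0 < d <= 1 -> (0 < N)%nat -> INR N2 = d * INR N -> 0 <= x1 <= 1 -> 0 <= x2 <= 1 ->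
  INR N ^ 2 * bernstein2 N N2 (compA d kappa N (fun z1 z2 => sqdist x1 x2 z1 z2 ^ 2)) x1 x2
  <= 12 + 12 / d ^ 2 + 48 * kappa ^ 4.
Proof.
  intros Hd HN HN2 Hx1 Hx2.
  assert (Hn : 1 <= INR N) by (apply (le_INR 1); lia).
  assert (HN2pos : (0 < N2)%nat) by (apply INR_lt; simpl; nra).
  set (c := kappa / INR N).
  assert (Hle : bernstein2 N N2 (compA d kappa N (fun z1 z2 => sqdist x1 x2 z1 z2 ^ 2)) x1 x2
                <= bernstein2 N N2 (fun y1 y2 => 12 * ((y1 - x1) ^ 4 + (y2 - x2) ^ 4)
                                                 + 48 * c ^ 4) x1 x2).
  { apply bernstein2_le; auto; intros y1 y2 Hy1 Hy2.
    change (compA d kappa N (sqdist x1 x2) y1 y2 ^ 2 <= 12 * ((y1 - x1) ^ 4 + (y2 - x2) ^ 4)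
                                                      + 48 * c ^ 4).
    pose proof (compA_sqdist_le d kappa N x1 x2 y1 y2 Hd Hy1 Hy2) as Hs; fold c in Hs.
    assert (0 <= compA d kappa N (sqdist x1 x2) y1 y2).
    { unfold compA, sqdist; apply Rplus_le_le_0_compat; apply pow2_ge_0. }
    apply Rle_trans with ((2 * (y1 - x1) ^ 2 + 2 * (y2 - x2) ^ 2 + 4 * c ^ 2) ^ 2);
      [apply pow_incr; lra|].
    pose proof (pow2_ge_0 ((y1 - x1) ^ 2 - (y2 - x2) ^ 2));
      pose proof (pow2_ge_0 ((y1 - x1) ^ 2 - 2 * c ^ 2));
      pose proof (pow2_ge_0 ((y2 - x2) ^ 2 - 2 * c ^ 2)); nra. }
  rewrite bernstein2_plus, bernstein2_scal, bernstein2_const in Hle.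
  pose proof (bernstein2_pow4_le N N2 x1 x2 HN HN2pos Hx1 Hx2).
  apply Rle_trans with (INR N ^ 2 * (12 * (/ INR N ^ 2 + / INR N2 ^ 2) + 48 * c ^ 4));
    [apply Rmult_le_compat_l; [apply pow2_ge_0 | lra]|].
  replace (INR N ^ 2 * (12 * (/ INR N ^ 2 + / INR N2 ^ 2) + 48 * c ^ 4))
    with (12 + 12 / d ^ 2 + 48 * kappa ^ 4 * / INR N ^ 2)
    by (unfold c; rewrite HN2; field; lra).
  assert (0 < / INR N ^ 2 <= 1).
  { split; [apply Rinv_0_lt_compat, pow_lt; lra|].
    rewrite <- Rinv_1; apply Rinv_le_contravar; nra. }
  assert (0 <= kappa ^ 4) by (replace (kappa ^ 4) with ((kappa ^ 2) ^ 2) by ring; apply pow2_ge_0).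
  nra.
Qed.

Lemma bernstein2_compA_remainder_le d kappa N N2 x1 x2 g eps C :
  0 < d <= 1 -> 0 < kappa -> (0 < N)%nat -> INR N2 = d * INR N ->
  0 <= x1 <= 1 -> 0 <= x2 <= 1 -> 0 <= eps -> 0 <= C ->
  (forall z1 z2, Rabs (z1 - x1) <= 1 + kappa -> Rabs (z2 - x2) <= 1 + kappa ->
     Rabs (g z1 z2) <= eps * sqdist x1 x2 z1 z2 + C * sqdist x1 x2 z1 z2 ^ 2) ->
  INR N * Rabs (bernstein2 N N2 (compA d kappa N g) x1 x2)
  <= eps * (1 + / d + 4 * kappa ^ 2) + C * (12 + 12 / d ^ 2 + 48 * kappa ^ 4) / INR N.
Proof.
  intros Hd Hk HN HN2 Hx1 Hx2 Heps HC Hg.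
  assert (Hn : 0 < INR N) by (apply lt_0_INR; auto).
  assert (Hle : Rabs (bernstein2 N N2 (compA d kappa N g) x1 x2)
    <= eps * bernstein2 N N2 (compA d kappa N (sqdist x1 x2)) x1 x2
       + C * bernstein2 N N2 (compA d kappa N (fun z1 z2 => sqdist x1 x2 z1 z2 ^ 2)) x1 x2).
  { rewrite <- !bernstein2_scal, <- bernstein2_plus.
    eapply Rle_trans; [apply bernstein2_abs_le; auto|].
    apply bernstein2_le; auto; intros y1 y2 Hy1 Hy2.
    apply Hg; apply (compA_grid_near d kappa N x1 x2 y1 y2); auto. }
  pose proof (bernstein2_compA_sqdist_le d kappa N N2 x1 x2 Hd HN HN2 Hx1 Hx2) as H1.
  pose proof (bernstein2_compA_sqdist_sq_le d kappa N N2 x1 x2 Hd HN HN2 Hx1 Hx2) as H2.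
  set (B1 := bernstein2 N N2 (compA d kappa N (sqdist x1 x2)) x1 x2) in *.
  set (B2 := bernstein2 N N2 (compA d kappa N (fun z1 z2 => sqdist x1 x2 z1 z2 ^ 2)) x1 x2) in *.
  apply Rmult_le_compat_l with (r := eps) in H1; auto.
  apply Rmult_le_compat_l with (r := C) in H2; auto.
  apply Rmult_le_compat_r with (r := / INR N) in H2; [|apply Rlt_le, Rinv_0_lt_compat; auto].
  apply Rle_trans with (INR N * (eps * B1 + C * B2)); [apply Rmult_le_compat_l; lra|].
  replace (INR N * (eps * B1 + C * B2)) with (eps * (INR N * B1) + C * (INR N ^ 2 * B2) * / INR N)
    by (field; lra).
  unfold Rdiv; lra.
Qed.

Lemma remainder_limit d kappa f x1 x2 :
  0 < d -> d <= 1 -> 0 < kappa -> C2_R2 f -> 0 <= x1 <= 1 -> 0 <= x2 <= 1 ->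
  forall eps, 0 < eps -> exists N0, forall N N2, (N0 <= N)%nat -> INR N2 = d * INR N ->
    INR N * Rabs (bernstein2 N N2
      (compA d kappa N (fun z1 z2 => f z1 z2 - taylor2_poly f x1 x2 z1 z2)) x1 x2) < eps.
Proof.
  intros Hd0 Hd1 Hk Hf Hx1 Hx2 eps Heps.
  set (C1 := 1 + / d + 4 * kappa ^ 2); set (C2 := 12 + 12 / d ^ 2 + 48 * kappa ^ 4).
  assert (HC1 : 0 < C1)
    by (unfold C1; pose proof (Rinv_0_lt_compat d Hd0); pose proof (pow2_ge_0 kappa); lra).
  assert (HC2 : 0 < C2).
  { unfold C2; pose proof (Rinv_0_lt_compat (d ^ 2) ltac:(nra)).
    pose proof (pow2_ge_0 (kappa ^ 2)).
    replace (kappa ^ 4) with ((kappa ^ 2) ^ 2) by ring; unfold Rdiv; lra. }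
  destruct (taylor2_remainder_le f x1 x2 (1 + kappa) Hf ltac:(lra) (eps / (2 * C1)))
    as (C & HC & Hrem); [apply Rdiv_lt_0_compat; lra|].
  destruct (eventually_inv_INR_lt (eps / (2 * (C * C2 + 1)))) as [N0 HN0];
    [apply Rdiv_lt_0_compat; nra|].
  exists N0; intros N N2 HN HN2; destruct (HN0 N HN) as [Hpos Hlt].
  eapply Rle_lt_trans;
    [apply (bernstein2_compA_remainder_le d kappa N N2 x1 x2 _ (eps / (2 * C1)) C); auto;
     apply Rlt_le, Rdiv_lt_0_compat; lra|].
  fold C1 C2; unfold Rdiv at 2; rewrite Rmult_assoc.
  assert (Hinv : 0 < / INR N) by (apply Rinv_0_lt_compat, lt_0_INR; auto).
  assert (C * (C2 * / INR N) < eps / 2).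
  { apply Rle_lt_trans with ((C * C2 + 1) * / INR N); [nra|].
    replace (eps / 2) with ((C * C2 + 1) * (eps / (2 * (C * C2 + 1)))) by (field; nra).
    apply Rmult_lt_compat_l; nra. }
  replace (eps / (2 * C1) * C1) with (eps / 2) by (field; lra).
  lra.
Qed.

Theorem lemma4 (d kappa : R) (f : R -> R -> R) (x1 x2 : R) :
  0 < d -> d <= 1 -> 0 < kappa ->
  C2_R2 f -> f 0 0 = 0 -> f 1 1 = 0 ->
  0 <= x1 <= 1 -> 0 <= x2 <= 1 ->
  forall eps : R, 0 < eps ->
  exists N0 : nat, forall N N2 : nat, (N0 <= N)%nat -> INR N2 = d * INR N ->
    Rabs (INR N * (bernstein2 N N2 (compA d kappa N f) x1 x2 - f x1 x2)
          - Ld d kappa f x1 x2) < eps.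
Proof.
  intros Hd0 Hd1 Hk Hf _ _ Hx1 Hx2 eps Heps.
  destruct (main_term_limit d kappa f x1 x2 Hd0 (eps / 2)) as [N1 Hmain]; [lra|].
  destruct (remainder_limit d kappa f x1 x2 Hd0 Hd1 Hk Hf Hx1 Hx2 (eps / 2)) as [N2' Hrem];
    [lra|].
  exists (Nat.max N1 N2'); intros N N2 HN HN2.
  specialize (Hmain N N2 ltac:(lia) HN2); specialize (Hrem N N2 ltac:(lia) HN2).
  set (rem := fun z1 z2 => f z1 z2 - taylor2_poly f x1 x2 z1 z2) in Hrem.
  rewrite (bernstein2_ext _ _ (compA d kappa N f)
             (fun y1 y2 => compA d kappa N (taylor2_poly f x1 x2) y1 y2
                           + compA d kappa N rem y1 y2))
    by (intros; unfold compA, rem; ring).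
  rewrite bernstein2_plus.
  set (T := bernstein2 N N2 (compA d kappa N (taylor2_poly f x1 x2)) x1 x2) in *.
  set (E := bernstein2 N N2 (compA d kappa N rem) x1 x2) in *.
  replace (INR N * (T + E - f x1 x2) - Ld d kappa f x1 x2)
    with ((INR N * (T - f x1 x2) - Ld d kappa f x1 x2) + INR N * E) by ring.
  pose proof (Rabs_triang (INR N * (T - f x1 x2) - Ld d kappa f x1 x2) (INR N * E)).
  rewrite Rabs_mult, (Rabs_pos_eq (INR N)) in * by apply pos_INR; lra.
Qed.
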